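(* Under the standing assumptions below, let $(x^\star,\lambda^\star,s^\star)$ be an optimal primal-dual solution, let $\epsilon>0$, and let $\zeta>0$ satisfy $\|(x^\star,s^\star)\|\le\zeta$ and $\zeta^2\le\chi/\epsilon^\kappa$ for some constants $\chi,\kappa>0$. Run Algorithm IIPM from $(x^0,\lambda^0,s^0)=(\zeta e,0,\zeta e)$. Then there is an index $K=O(n^2|\log\epsilon|)$ such that the iterates satisfy $\mu^k\le\epsilon$ for all $k\ge K$.
   Context: Standing assumptions: $Q\in\mathbb{S}^{n+1}$ (real symmetric), $q\in\mathbb{R}^{n+1}$, $A\in\mathbb{R}^{m\times(n+1)}$ has full row rank $m$, and $x^TQx>0$ for every nonzero $x$ with $Ax=0$; the problem is $\min\{\tfrac12x^TQx+q^Tx : Ax=0,\ x\ge0\}$. An optimal primal-dual solution is $(x^\star,\lambda^\star,s^\star)$ with $Qx^\star+q+A^T\lambda^\star-s^\star=0$, $Ax^\star=0$, $x^\star,s^\star\ge0$, $(x^\star)^Ts^\star=0$. $e\in\mathbb{R}^{n+1}$ is the all-ones vector, $X=\mathrm{Diag}(x)$, $S=\mathrm{Diag}(s)$. Residuals: $r_d(x,\lambda,s)=Qx+q+A^T\lambda-s$, $r_p(x,\lambda,s)=Ax$, $r_c(x,\lambda,s)=Xs$, and $\mu(x,s)=x^Ts/(n+1)$; write $r_d^k,r_p^k,r_c^k,\mu^k$ for their values at the $k$-th iterate. Neighborhood, for parameters $\gamma\in(0,1)$, $\beta\ge1$: $\mathcal N_{-\infty}(\gamma,\beta)=\{(x,\lambda,s):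 \|(r_d,r_p)\|/\mu\le\beta\|(r_d^0,r_p^0)\|/\mu^0,\ (x,s)>0,\ Xs\ge\gamma\mu(x,s)e\}$. Algorithm IIPM (parameters $\beta\ge1$, $\gamma\in(0,1)$, $0<\sigma^{\min}<\sigma^{\max}\le\tfrac12$): starting from $(x^0,s^0)>0$, at iteration $k$ choose $\sigma^k\in[\sigma^{\min},\sigma^{\max}]$, compute $(\Delta x^k,\Delta\lambda^k,\Delta s^k)$ solving $Q\Delta x+A^T\Delta\lambda-\Delta s=-r_d^k$, $A\Delta x=-r_p^k$, $S^k\Delta x+X^k\Delta s=-r_c^k+\sigma^k\mu^ke$; then choose $\alpha^k$ as the largest $\alpha\in(0,1]$ such that $(x^k,\lambda^k,s^k)+\alpha(\Delta x^k,\Delta\lambda^k,\Delta s^k)\in\mathcal N_{-\infty}(\gamma,\beta)$ and $\mu(x^k+\alpha\Delta x^k,s^k+\alpha\Delta s^k)\le(1-0.01\alpha)\mu^k$; set the next iterate to $(x^k,\lambda^k,s^k)+\alpha^k(\Delta x^k,\Delta\lambda^k,\Delta s^k)$. The constant in $O(\cdot)$ depends on $\chi,\kappa,\beta,\gamma,\sigma^{\min},\sigma^{\max}$ but not on $n$ or $\epsilon$. *)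

From HB Require Import structures.
From mathcomp Require Import all_boot all_order all_algebra.
From mathcomp Require Import all_classical all_reals all_analysis.
Set Implicit Arguments. Unset Strict Implicit. Unset Printing Implicit Defensive.
Import Order.TTheory GRing.Theory Num.Theory.
Local Open Scope ring_scope.

Section IIPM.
Variable R : realType.

Definition dotv (p : nat) (u v : 'cV[R]_p) : R := (u^T *m v) 0 0.
Definition vnorm (p : nat) (u : 'cV[R]_p) : R := Num.sqrt (dotv u u).
Definition pnorm (p r : nat) (u : 'cV[R]_p) (v : 'cV[R]_r) : R :=
  Num.sqrt (dotv u u + dotv v v).

Definition onesv (p : nat) : 'cV[R]_p := const_mx 1.

Variables (n m : nat) (Q : 'M[R]_n.+1) (q : 'cV[R]_n.+1) (A : 'M[R]_(m, n.+1)).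

Definition std_assumptions : Prop :=
  [/\ Q^T = Q, \rank A = m &
      forall x : 'cV[R]_n.+1, A *m x = 0 -> x != 0 -> 0 < dotv x (Q *m x)].

Definition r_d (x : 'cV[R]_n.+1) (l : 'cV[R]_m) (s : 'cV[R]_n.+1) : 'cV[R]_n.+1 :=
  Q *m x + q + A^T *m l - s.
Definition r_p (x : 'cV[R]_n.+1) : 'cV[R]_m := A *m x.
Definition r_c (x s : 'cV[R]_n.+1) : 'cV[R]_n.+1 := \col_i (x i 0 * s i 0).
Definition mu (x s : 'cV[R]_n.+1) : R := dotv x s / n.+1%:R.

Definition optimal_pd (x : 'cV[R]_n.+1) (l : 'cV[R]_m) (s : 'cV[R]_n.+1) : Prop :=
  [/\ r_d x l s = 0, A *m x = 0, (forall i, 0 <= x i 0),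
      (forall i, 0 <= s i 0) & dotv x s = 0].

Definition nbhd (gamma beta : R) (x0 : 'cV[R]_n.+1) (l0 : 'cV[R]_m) (s0 : 'cV[R]_n.+1)
    (x : 'cV[R]_n.+1) (l : 'cV[R]_m) (s : 'cV[R]_n.+1) : Prop :=
  [/\ pnorm (r_d x l s) (r_p x) / mu x s
        <= beta * pnorm (r_d x0 l0 s0) (r_p x0) / mu x0 s0,
      (forall i, 0 < x i 0), (forall i, 0 < s i 0) &
      (forall i, gamma * mu x s <= x i 0 * s i 0)].

Definition IIPM_run (beta gamma smin smax : R)
    (x : nat -> 'cV[R]_n.+1) (l : nat -> 'cV[R]_m) (s : nat -> 'cV[R]_n.+1)
    (sigma : nat -> R)
    (dx : nat -> 'cV[R]_n.+1) (dl : nat -> 'cV[R]_m) (ds : nat -> 'cV[R]_n.+1)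
    (alpha : nat -> R) : Prop :=
  (forall i, 0 < x 0%N i 0) /\ (forall i, 0 < s 0%N i 0) /\
  forall k : nat,
    let acceptable (a : R) :=
      [/\ 0 < a, a <= 1,
          nbhd gamma beta (x 0%N) (l 0%N) (s 0%N)
               (x k + a *: dx k) (l k + a *: dl k) (s k + a *: ds k) &
          mu (x k + a *: dx k) (s k + a *: ds k) <= (1 - a / 100) * mu (x k) (s k)] in
    [/\ smin <= sigma k <= smax,
        [/\ Q *m dx k + A^T *m dl k - ds k = - r_d (x k) (l k) (s k),
        A *m dx k = - r_p (x k) &
        (forall i, s k i 0 * dx k i 0 + x k i 0 * ds k i 0
                   = - (x k i 0 * s k i 0) + sigma k * mu (x k) (s k))],
        acceptable (alpha k) /\ (forall a, acceptable a -> a <= alpha k) &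
        [/\ x k.+1 = x k + alpha k *: dx k,
            l k.+1 = l k + alpha k *: dl k &
            s k.+1 = s k + alpha k *: ds k]].

End IIPM.

From HB Require Import structures.
From mathcomp Require Import all_boot all_order all_algebra.
From mathcomp Require Import all_classical all_reals all_analysis.
From mathcomp Require Import ring lra.
Import Order.TTheory GRing.Theory Num.Theory.
Set Implicit Arguments. Unset Strict Implicit. Unset Printing Implicit Defensive.
Local Open Scope ring_scope.

(* Every Newton step shrinks both infeasibility residuals by the same factor
   [1 - alpha], so the k-th residuals are [nu_k] times the initial ones with
   [nu_k = prod_(j < k) (1 - alpha_j)], and the neighbourhood condition yields
   [nu_k zeta^2 <= beta mu_k].  Positive semidefiniteness of [Q] on [ker A],
   applied to the interpolant [nu_k (x0, s0) + (1 - nu_k) (xs, ss) - (x, s)]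
   between the iterate and the optimal pair [(xs, ss)], and to the Newton step
   shifted by [nu_k ((x0, s0) - (xs, ss))], bounds
   [nu_k zeta ||(x, s)||_1] by [O(n mu)] and then the scaled step norm
   [sum_i (s_i dx_i^2 / x_i + x_i ds_i^2 / s_i)] by [O(n^2 mu)].  Hence every
   [|dx_i ds_i|] and [|dx^T ds|] is [O(n^2 mu)], so the step length
   [abar = Theta(1 / n^2)] is always acceptable, [alpha_k >= abar], and
   [mu_k <= (1 - abar / 100)^k zeta^2]; with [zeta^2 <= chi / eps^kappa] this
   is at most [eps] after [O(n^2 |ln eps|)] iterations. *)

Section ScalarBounds.
Variable R : realFieldType.

Lemma ler_term_sumr (N : nat) (F : 'I_N -> R) :
  (forall i, 0 <= F i) -> forall j, F j <= \sum_i F i.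
Proof. by move=> F0 j; rewrite (bigD1 j) //= lerDl sumr_ge0. Qed.

Lemma sumr_sqr_le (N : nat) (F : 'I_N -> R) :
  (forall i, 0 <= F i) -> \sum_i F i ^+ 2 <= (\sum_i F i) ^+ 2.
Proof.
move=> F0; rewrite [X in _ <= X]expr2 mulr_sumr; apply: ler_sum => i _.
by rewrite expr2 ler_wpM2r ?ler_term_sumr.
Qed.

Lemma sqr_add3_le (g v w : R) : (g + v + w) ^+ 2 <= 3 * (g ^+ 2 + v ^+ 2 + w ^+ 2).
Proof.
rewrite -subr_ge0.
have -> : 3 * (g ^+ 2 + v ^+ 2 + w ^+ 2) - (g + v + w) ^+ 2
  = (g - v) ^+ 2 + (v - w) ^+ 2 + (g - w) ^+ 2 by ring.
by rewrite !addr_ge0 ?sqr_ge0.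
Qed.

Lemma sqr_subr_le (a u : R) : (a - u) ^+ 2 <= 2 * a ^+ 2 + 2 * u ^+ 2.
Proof.
rewrite -subr_ge0.
have -> : 2 * a ^+ 2 + 2 * u ^+ 2 - (a - u) ^+ 2 = (a + u) ^+ 2 by ring.
exact: sqr_ge0.
Qed.

Lemma sqr_shift_le (t z c : R) : 0 <= c <= z -> (t * (z - c)) ^+ 2 <= (t * z) ^+ 2.
Proof.
move=> /andP[c0 cz]; rewrite !exprMn ler_wpM2l ?sqr_ge0 //.
by rewrite !expr2 ler_pM //; lra.
Qed.

Lemma l1_interpolant_term (t z a b x s : R) :
  0 <= t <= 1 -> 0 <= a <= z -> 0 <= b <= z -> 0 < x -> 0 < s ->
  t * z * (x + s) <=
  2 * t * z ^+ 2 + (1 - t) ^+ 2 * (a * b) + x * s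
  - (t * z + (1 - t) * a - x) * (t * z + (1 - t) * b - s).
Proof.
move=> /andP[t0 t1] /andP[a0 az] /andP[b0 bz] x0 s0.
have h1 : t * z * (1 - t) * (a + b) <= t * z * (1 - t) * (2 * z).
  by rewrite ler_wpM2l ?mulr_ge0 //; lra.
have h2 : 0 <= (1 - t) * (a * s + x * b).
  by rewrite mulr_ge0 ?subr_ge0 // addr_ge0 // mulr_ge0 // ltW.
have h3 : 0 <= (t * z) ^+ 2 by exact: sqr_ge0.
have -> : 2 * t * z ^+ 2 + (1 - t) ^+ 2 * (a * b) + x * s
  - (t * z + (1 - t) * a - x) * (t * z + (1 - t) * b - s)
  = t * z * (x + s) + (t * z) ^+ 2
    + (t * z * (1 - t) * (2 * z) - t * z * (1 - t) * (a + b))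
    + (1 - t) * (a * s + x * b) by ring.
lra.
Qed.

(* The nonnegative sum is the monotonicity inequality for the interpolant
   [t z e + (1 - t) xs - x]; [xs^T ss = 0] is complementarity. *)
Lemma l1_interpolant_bound (N : nat) (x s xs ss : 'I_N -> R) (t z beta mu : R) :
  0 <= t <= 1 -> (forall i, 0 <= xs i <= z) -> (forall i, 0 <= ss i <= z) ->
  (forall i, 0 < x i) -> (forall i, 0 < s i) ->
  \sum_i xs i * ss i = 0 ->
  0 <= \sum_i (t * z + (1 - t) * xs i - x i) * (t * z + (1 - t) * ss i - s i) ->
  \sum_i x i * s i = N%:R * mu ->
  t * z ^+ 2 <= beta * mu -> 1 <= beta ->
  t * z * \sum_i (x i + s i) <= 3 * beta * (N%:R * mu).
Proof.
move=> ht hxs hss hx hs hxss hmono hmu htb hb.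
have := ler_sum (index_enum _) (P := xpredT)
  (fun i _ => l1_interpolant_term ht (hxs i) (hss i) (hx i) (hs i)).
rewrite -mulr_sumr !sumrB !big_split /= -[\sum_(i < N) (1 - t) ^+ 2 * _]mulr_sumr.
rewrite hxss mulr0 addr0 sumr_const card_ord hmu -mulr_natl.
have Nmu0 : 0 <= N%:R * mu.
  by rewrite -hmu sumr_ge0 // => i _; rewrite mulr_ge0 // ltW.
have : N%:R * (t * z ^+ 2) <= N%:R * (beta * mu) by rewrite ler_wpM2l.
have : 0 <= (beta - 1) * (N%:R * mu) by rewrite mulr_ge0 //; lra.
lra.
Qed.

Lemma centering_sqr_le (p sig mu gam : R) :
  0 < p -> 0 < mu -> 0 < gam -> gam * mu <= p -> 0 <= sig <= 1 ->
  (sig * mu - p) ^+ 2 / p <= p + mu / gam.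
Proof.
move=> p0 mu0 g0 hp /andP[sg0 sg1].
rewrite ler_pdivrMr // mulrDl.
have hmu2 : mu ^+ 2 <= mu / gam * p.
  rewrite mulrAC ler_pdivlMr // expr2 -mulrA [mu * gam]mulrC.
  by rewrite ler_wpM2l // ltW.
have hs2 : (sig * mu) ^+ 2 <= mu ^+ 2.
  rewrite exprMn -[X in _ <= X]mul1r ler_wpM2r ?sqr_ge0 //.
  by rewrite expr2 -[1]mulr1 ler_pM.
have : 0 <= sig * mu * p by rewrite !mulr_ge0 // ltW.
have -> : (sig * mu - p) ^+ 2 = (sig * mu) ^+ 2 - 2 * (sig * mu * p) + p * p by ring.
lra.
Qed.


Definition scaled_sqr (x s dx ds : R) := s * dx ^+ 2 / x + x * ds ^+ 2 / s.

Lemma scaled_sqr_ge0 (x s dx ds : R) : 0 < x -> 0 < s -> 0 <= scaled_sqr x s dx ds.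
Proof.
move=> /ltW x0 /ltW s0.
by rewrite /scaled_sqr addr_ge0 // divr_ge0 // mulr_ge0 // sqr_ge0.
Qed.

Lemma scaled_sqrE (x s a b : R) : 0 < x -> 0 < s ->
  scaled_sqr x s a b = (s * a + x * b) ^+ 2 / (x * s) - 2 * (a * b).
Proof. by move=> x0 s0; rewrite /scaled_sqr; field; rewrite !gt_eqF. Qed.

Lemma abs_mul_le_scaled_sqr (x s dx ds : R) : 0 < x -> 0 < s ->
  `|dx * ds| <= scaled_sqr x s dx ds / 2.
Proof.
move=> x0 s0; have xs0 : 0 < x * s by rewrite mulr_gt0.
have : 0 <= (s * dx + x * ds) ^+ 2 / (x * s) by rewrite divr_ge0 ?sqr_ge0 // ltW.
have : 0 <= (s * - dx + x * ds) ^+ 2 / (x * s) by rewrite divr_ge0 ?sqr_ge0 // ltW.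
have e1 := scaled_sqrE dx ds x0 s0; have e2 := scaled_sqrE (- dx) ds x0 s0.
rewrite {1}/scaled_sqr sqrrN -/(scaled_sqr x s dx ds) in e2.
by rewrite ler_norml => h1 h2; apply/andP; split; lra.
Qed.

Lemma scaled_sqr_shift_le (x s a b u v T : R) : 0 < x -> 0 < s ->
  u ^+ 2 <= T -> v ^+ 2 <= T ->
  scaled_sqr x s (a - u) (b - v)
    <= 2 * scaled_sqr x s a b + 2 * (T * (x ^+ 2 + s ^+ 2) / (x * s)).
Proof.
move=> x0 s0 hu hv.
have hdx : (a - u) ^+ 2 <= 2 * a ^+ 2 + 2 * T.
  by apply: le_trans (sqr_subr_le a u) _; rewrite lerD2l ler_wpM2l.
have hds : (b - v) ^+ 2 <= 2 * b ^+ 2 + 2 * T.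
  by apply: le_trans (sqr_subr_le b v) _; rewrite lerD2l ler_wpM2l.
have := ler_wpM2l (divr_ge0 (ltW s0) (ltW x0)) hdx.
have := ler_wpM2l (divr_ge0 (ltW x0) (ltW s0)) hds.
have -> : 2 * scaled_sqr x s a b + 2 * (T * (x ^+ 2 + s ^+ 2) / (x * s))
  = s / x * (2 * a ^+ 2 + 2 * T) + x / s * (2 * b ^+ 2 + 2 * T).
  by rewrite /scaled_sqr; field; rewrite !gt_eqF.
have -> : scaled_sqr x s (a - u) (b - v) = s / x * (a - u) ^+ 2 + x / s * (b - v) ^+ 2.
  by rewrite /scaled_sqr; ring.
lra.
Qed.

Lemma scaled_step_term_le (x s dx ds a' b' t z sig mu gam : R) :
  0 < x -> 0 < s -> 0 < mu -> 0 < gam -> gam * mu <= x * s ->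
  0 <= sig <= 1 -> 0 <= a' <= z -> 0 <= b' <= z ->
  s * dx + x * ds = - (x * s) + sig * mu ->
  scaled_sqr x s dx ds <=
  6 * (x * s) + 6 * (mu / gam) + 8 * (t * z) ^+ 2 / (gam * mu) * (x ^+ 2 + s ^+ 2)
  - 4 * ((dx + t * (z - a')) * (ds + t * (z - b'))).
Proof.
move=> x0 s0 mu0 g0 hcen hsig ha hb hnewton.
set u := t * (z - a'); set v := t * (z - b').
set a := dx + u; set b := ds + v; set T := (t * z) ^+ 2.
have xs0 : 0 < x * s by rewrite mulr_gt0.
have gm0 : 0 < gam * mu by rewrite mulr_gt0.
have hu : u ^+ 2 <= T := sqr_shift_le t ha.
have hv : v ^+ 2 <= T := sqr_shift_le t hb.
have hsplit := scaled_sqr_shift_le a b x0 s0 hu hv.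
rewrite /a /b !addrK in hsplit.
have hsum : s * a + x * b = (sig * mu - x * s) + s * u + x * v.
  have -> : s * a + x * b = (s * dx + x * ds) + s * u + x * v by rewrite /a /b; ring.
  by rewrite hnewton; ring.
have huv : (s * u) ^+ 2 + (x * v) ^+ 2 <= T * (x ^+ 2 + s ^+ 2).
  have -> : T * (x ^+ 2 + s ^+ 2) = s ^+ 2 * T + x ^+ 2 * T by ring.
  by rewrite [(s * u) ^+ 2]exprMn [(x * v) ^+ 2]exprMn; apply: lerD; rewrite ler_wpM2l ?sqr_ge0.
have hT0 : 0 <= T * (x ^+ 2 + s ^+ 2) by rewrite mulr_ge0 ?addr_ge0 ?sqr_ge0.
have hTp : T * (x ^+ 2 + s ^+ 2) / (x * s) <= T * (x ^+ 2 + s ^+ 2) / (gam * mu).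
  by rewrite ler_wpM2l // lef_pV2 ?posrE.
have hsq : (s * a + x * b) ^+ 2 / (x * s)
    <= 3 * ((sig * mu - x * s) ^+ 2 / (x * s)) + 3 * (T * (x ^+ 2 + s ^+ 2) / (x * s)).
  have -> : 3 * ((sig * mu - x * s) ^+ 2 / (x * s)) + 3 * (T * (x ^+ 2 + s ^+ 2) / (x * s))
    = 3 * ((sig * mu - x * s) ^+ 2 + T * (x ^+ 2 + s ^+ 2)) / (x * s) by ring.
  rewrite hsum; apply: ler_wpM2r; first by rewrite invr_ge0 ltW.
  by apply: le_trans (sqr_add3_le _ _ _) _; rewrite ler_wpM2l // -addrA lerD2l.
have hcent := centering_sqr_le xs0 mu0 g0 hcen hsig.
rewrite (scaled_sqrE a b x0 s0) in hsplit.
have -> : 8 * T / (gam * mu) * (x ^+ 2 + s ^+ 2) = 8 * (T * (x ^+ 2 + s ^+ 2) / (gam * mu)).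
  by ring.
lra.
Qed.

Definition step_const (gam beta : R) := 6 * (1 + 1 / gam) + 72 * beta ^+ 2 / gam.

Lemma step_const_ge6 (gam beta : R) : 0 < gam -> 6 <= step_const gam beta.
Proof.
move=> g0; rewrite /step_const.
have : 0 <= 1 / gam by rewrite divr_ge0 // ltW.
have : 0 <= 72 * beta ^+ 2 / gam by rewrite divr_ge0 ?(ltW g0) // mulr_ge0 ?sqr_ge0.
lra.
Qed.

Lemma scaled_step_sum_le (N : nat) (x s dx ds xs ss : 'I_N -> R) (t z sig mu gam beta : R) :
  (forall i, 0 < x i) -> (forall i, 0 < s i) -> 0 < mu -> 0 < gam ->
  (forall i, gam * mu <= x i * s i) -> 0 <= sig <= 1 -> 0 <= z ->
  (forall i, 0 <= xs i <= z) -> (forall i, 0 <= ss i <= z) -> 0 <= t <= 1 ->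
  (forall i, s i * dx i + x i * ds i = - (x i * s i) + sig * mu) ->
  \sum_i x i * s i = N%:R * mu ->
  \sum_i xs i * ss i = 0 ->
  0 <= \sum_i (t * z + (1 - t) * xs i - x i) * (t * z + (1 - t) * ss i - s i) ->
  0 <= \sum_i (dx i + t * (z - xs i)) * (ds i + t * (z - ss i)) ->
  t * z ^+ 2 <= beta * mu -> 1 <= beta ->
  \sum_i scaled_sqr (x i) (s i) (dx i) (ds i) <= step_const gam beta * (N%:R ^+ 2 * mu).
Proof.
move=> hx hs mu0 g0 hcen hsig z0 hxs hss ht hnewton hmu hxss hmono hmono' htb hb.
have t0 : 0 <= t by case/andP: ht.
have gm0 : 0 < gam * mu by rewrite mulr_gt0.
set K := 8 * (t * z) ^+ 2 / (gam * mu).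
have := ler_sum (index_enum _) (P := xpredT) (fun i _ =>
  scaled_step_term_le t (hx i) (hs i) mu0 g0 (hcen i) hsig (hxs i) (hss i) (hnewton i)).
rewrite -/K sumrB !big_split /= -!mulr_sumr sumr_const card_ord hmu -mulr_natl.
set S1 := \sum_i (x i + s i).
have S10 : 0 <= S1 by rewrite sumr_ge0 // => i _; rewrite addr_ge0 // ltW.
have hsqr : \sum_i (x i ^+ 2 + s i ^+ 2) <= S1 ^+ 2.
  apply: le_trans (sumr_sqr_le (fun i => addr_ge0 (ltW (hx i)) (ltW (hs i)))).
  apply: ler_sum => i _; rewrite sqrrD lerD2r -[X in X <= _]addr0 lerD2l.
  by rewrite mulrn_wge0 // mulr_ge0 // ltW.
have hl1 := l1_interpolant_bound ht hxs hss hx hs hxss hmono hmu htb hb.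
have hK : K * \sum_i (x i ^+ 2 + s i ^+ 2) <= 72 * beta ^+ 2 / gam * (N%:R ^+ 2 * mu).
  have K0 : 0 <= K by rewrite /K divr_ge0 ?(ltW gm0) // mulr_ge0 ?sqr_ge0.
  apply: le_trans (ler_wpM2l K0 hsqr) _.
  have -> : K * S1 ^+ 2 = 8 * (t * z * S1) ^+ 2 / (gam * mu) by rewrite /K; ring.
  have -> : 72 * beta ^+ 2 / gam * (N%:R ^+ 2 * mu)
      = 8 * (3 * beta * (N%:R * mu)) ^+ 2 / (gam * mu) by field; rewrite !gt_eqF.
  apply: ler_wpM2r; first by rewrite invr_ge0 ltW.
  have tzS0 : 0 <= t * z * S1 by rewrite !mulr_ge0.
  by apply: ler_wpM2l => //; rewrite !expr2 ler_pM.
have hN : N%:R * mu <= N%:R ^+ 2 * mu.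
  apply: ler_wpM2r; first exact: ltW.
  by rewrite -natrX ler_nat; case: (N) => // k; rewrite expnS leq_pmulr.
have hNg : N%:R * (mu / gam) <= N%:R ^+ 2 * mu / gam.
  by rewrite mulrA ler_wpM2r // invr_ge0 ltW.
rewrite /step_const.
have -> : (6 * (1 + 1 / gam) + 72 * beta ^+ 2 / gam) * (N%:R ^+ 2 * mu)
  = 6 * (N%:R ^+ 2 * mu) + 6 * (N%:R ^+ 2 * mu / gam)
    + 72 * beta ^+ 2 / gam * (N%:R ^+ 2 * mu) by ring.
lra.
Qed.

Lemma step_products_le (N : nat) (x s dx ds : 'I_N -> R) (W : R) :
  (forall i, 0 < x i) -> (forall i, 0 < s i) ->
  \sum_i scaled_sqr (x i) (s i) (dx i) (ds i) <= W ->
  (forall i, `|dx i * ds i| <= W) /\ `|\sum_i dx i * ds i| <= W.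
Proof.
move=> hx hs hW.
have D0 i : 0 <= scaled_sqr (x i) (s i) (dx i) (ds i) := scaled_sqr_ge0 _ _ (hx i) (hs i).
have SD0 : 0 <= \sum_i scaled_sqr (x i) (s i) (dx i) (ds i) by rewrite sumr_ge0.
split=> [i|].
  apply: le_trans (abs_mul_le_scaled_sqr _ _ (hx i) (hs i)) _.
  by apply: le_trans hW; have := ler_term_sumr D0 i; have := D0 i; lra.
apply: le_trans (ler_norm_sum _ _ _) _.
apply: le_trans (ler_sum (index_enum _) (P := xpredT)
  (fun i _ => abs_mul_le_scaled_sqr (dx i) (ds i) (hx i) (hs i))) _.
by rewrite -mulr_suml; lra.
Qed.

Lemma newton_prod_expand (x s dx ds sig mu b : R) :
  s * dx + x * ds = - (x * s) + sig * mu ->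
  (x + b * dx) * (s + b * ds) = (1 - b) * (x * s) + b * (sig * mu) + b ^+ 2 * (dx * ds).
Proof.
move=> hnewton.
have -> : (x + b * dx) * (s + b * ds) = x * s + b * (s * dx + x * ds) + b ^+ 2 * (dx * ds).
  by ring.
by rewrite hnewton; ring.
Qed.

Lemma newton_prod_ge (x s dx ds sig mu gam W b : R) :
  s * dx + x * ds = - (x * s) + sig * mu -> gam * mu <= x * s ->
  `|dx * ds| <= W -> 0 <= b <= 1 ->
  (1 - b) * (gam * mu) + b * (sig * mu) - b ^+ 2 * W <= (x + b * dx) * (s + b * ds).
Proof.
move=> hnewton hcen hW /andP[b0 b1]; rewrite (newton_prod_expand _ hnewton).
have : (1 - b) * (gam * mu) <= (1 - b) * (x * s) by rewrite ler_wpM2l // subr_ge0.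
have : - (b ^+ 2 * W) <= b ^+ 2 * (dx * ds).
  have : - W <= dx * ds by have := ler_norm (- (dx * ds)); rewrite normrN; lra.
  by move=> hlow; rewrite -mulrN ler_wpM2l ?sqr_ge0.
lra.
Qed.

(* A coordinate cannot turn nonpositive along a segment on which the product
   stays positive: it would vanish at [b = x / - u] first. *)
Lemma gt0_of_segment_prod (x u y v a : R) : 0 < x ->
  (forall b, 0 < b <= a -> 0 < (x + b * u) * (y + b * v)) -> 0 < a -> 0 < x + a * u.
Proof.
move=> x0 hprod a0; rewrite ltNge; apply/negP => hle.
have u0 : u < 0.
  rewrite ltNge; apply/negP => u0.
  have : 0 <= a * u by rewrite mulr_ge0 // ltW.
  lra.
have b0 : 0 < x / - u by rewrite divr_gt0 // oppr_gt0.
have ba : x / - u <= a by rewrite ler_pdivrMr ?oppr_gt0 // mulrN; lra.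
have hzero : x + x / - u * u = 0 by field; rewrite lt_eqF.
by have := hprod _ (introT andP (conj b0 ba)); rewrite hzero mul0r ltxx.
Qed.

Lemma newton_step_pos (x s dx ds sig mu gam W a : R) :
  0 < x -> 0 < s -> 0 < mu -> 0 < gam ->
  s * dx + x * ds = - (x * s) + sig * mu -> gam * mu <= x * s ->
  `|dx * ds| <= W -> 0 < a <= 1 -> a * W < sig * mu ->
  0 < x + a * dx /\ 0 < s + a * ds.
Proof.
move=> x0 s0 mu0 g0 hnewton hcen hW /andP[a0 a1] haW.
have W0 : 0 <= W by apply: le_trans hW.
have hprod b : 0 < b <= a -> 0 < (x + b * dx) * (s + b * ds).
  case/andP=> b0 ba; have b1 := le_trans ba a1.
  apply: lt_le_trans (newton_prod_ge hnewton hcen hW _); last by rewrite ltW.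
  have : 0 <= (1 - b) * (gam * mu) by rewrite mulr_ge0 ?subr_ge0 // ltW // mulr_gt0.
  have bW : b * W <= a * W by rewrite ler_wpM2r.
  have -> : (1 - b) * (gam * mu) + b * (sig * mu) - b ^+ 2 * W
    = (1 - b) * (gam * mu) + b * (sig * mu - b * W) by ring.
  have : 0 < b * (sig * mu - b * W) by rewrite mulr_gt0 // subr_gt0; lra.
  lra.
split; first exact: gt0_of_segment_prod x0 hprod a0.
by apply: gt0_of_segment_prod s0 _ a0 => b hb; rewrite mulrC; exact: hprod.
Qed.

Lemma mean_newton_prod (N : nat) (x s dx ds : 'I_N -> R) (sig mu a : R) :
  (0 < N)%N ->
  (forall i, s i * dx i + x i * ds i = - (x i * s i) + sig * mu) ->
  \sum_i x i * s i = N%:R * mu ->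
  (\sum_i (x i + a * dx i) * (s i + a * ds i)) / N%:R
    = (1 - a) * mu + a * (sig * mu) + a ^+ 2 * ((\sum_i dx i * ds i) / N%:R).
Proof.
move=> N0 hnewton hmu.
rewrite (eq_bigr _ (fun i _ => newton_prod_expand a (hnewton i))).
rewrite !big_split /= -!mulr_sumr hmu sumr_const card_ord -mulr_natl.
by field; rewrite pnatr_eq0 -lt0n.
Qed.

Lemma newton_step_safe (N : nat) (x s dx ds : 'I_N -> R) (sig mu gam W a : R) :
  (0 < N)%N -> (forall i, 0 < x i) -> (forall i, 0 < s i) -> 0 < mu -> 0 < gam < 1 ->
  0 < sig <= 1 / 2 ->
  (forall i, s i * dx i + x i * ds i = - (x i * s i) + sig * mu) ->
  (forall i, gam * mu <= x i * s i) ->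
  \sum_i x i * s i = N%:R * mu ->
  (forall i, `|dx i * ds i| <= W) -> `|\sum_i dx i * ds i| <= W ->
  0 < a <= 1 -> 4 * (a * W) <= sig * (1 - gam) * mu ->
  let M := (\sum_i (x i + a * dx i) * (s i + a * ds i)) / N%:R in
  [/\ forall i, 0 < x i + a * dx i, forall i, 0 < s i + a * ds i,
      forall i, gam * M <= (x i + a * dx i) * (s i + a * ds i),
      M <= (1 - a / 100) * mu & (1 - a) * mu <= M].
Proof.
move=> N0 hx hs mu0 /andP[g0 g1] /andP[sg0 sg1] hnewton hcen hmu hW hSW ha haW M.
have /andP[a0 a1] := ha.
have W0 : 0 <= W by apply: le_trans (hW (Ordinal N0)).
set S := (\sum_i dx i * ds i) / N%:R.
have hM : M = (1 - a) * mu + a * (sig * mu) + a ^+ 2 * S := mean_newton_prod a N0 hnewton hmu.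
set X := a * (sig * mu); set Y := a ^+ 2 * W.
have hS : `|a ^+ 2 * S| <= Y.
  rewrite /Y normrM ger0_norm ?sqr_ge0 // ler_wpM2l ?sqr_ge0 //.
  rewrite /S normrM normfV [`|N%:R|]ger0_norm ?ler0n // ler_pdivrMr ?ltr0n //.
  by rewrite (le_trans hSW) // ler_peMr // ler1n.
move: hS; rewrite ler_norml => /andP[hSl hSu].
have hY : 4 * Y <= X - gam * X.
  have -> : 4 * Y = a * (4 * (a * W)) by rewrite /Y; ring.
  have -> : X - gam * X = a * (sig * (1 - gam) * mu) by rewrite /X; ring.
  by rewrite ler_wpM2l // ltW.
have hX : X <= a * mu / 2.
  have -> : a * mu / 2 = a * (1 / 2 * mu) by ring.
  by rewrite ler_wpM2l ?ler_wpM2r // ltW.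
have Y0 : 0 <= Y by rewrite mulr_ge0 ?sqr_ge0.
have gX : 0 <= gam * X by rewrite !mulr_ge0 // ltW.
have gY : gam * Y <= Y by rewrite ler_piMl // ltW.
have haWs : a * W < sig * mu.
  have : 0 < gam * (sig * mu) by rewrite !mulr_gt0.
  rewrite (_ : sig * (1 - gam) * mu = sig * mu - gam * (sig * mu)) in haW; last by ring.
  have : 0 <= a * W by rewrite mulr_ge0 // ltW.
  lra.
split=> [i|i|i||].
- by case: (newton_step_pos (hx i) (hs i) mu0 g0 (hnewton i) (hcen i) (hW i) ha haWs).
- by case: (newton_step_pos (hx i) (hs i) mu0 g0 (hnewton i) (hcen i) (hW i) ha haWs).
- have := newton_prod_ge (hnewton i) (hcen i) (hW i) (introT andP (conj (ltW a0) a1)).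
  have : gam * M <= (1 - a) * (gam * mu) + gam * X + gam * Y.
    have -> : (1 - a) * (gam * mu) + gam * X + gam * Y = gam * ((1 - a) * mu + X + Y) by ring.
    by rewrite ler_wpM2l ?(ltW g0) // hM lerD2l.
  rewrite -/X -/Y; lra.
- have -> : (1 - a / 100) * mu = mu - a * mu / 100 by ring.
  by rewrite hM -/X (_ : (1 - a) * mu = mu - a * mu); [lra | ring].
- by rewrite hM -/X; lra.
Qed.

End ScalarBounds.

Section VectorFacts.
Variable R : realType.

Lemma dotvE (p : nat) (u v : 'cV[R]_p) : dotv u v = \sum_i u i 0 * v i 0.
Proof. by rewrite /dotv mxE; apply: eq_bigr => i _; rewrite mxE. Qed.

Lemma dotv_ge0 (p : nat) (u : 'cV[R]_p) : 0 <= dotv u u.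
Proof. by rewrite dotvE sumr_ge0 // => i _; rewrite -expr2 sqr_ge0. Qed.

Lemma dotv_eq0 (p : nat) (u : 'cV[R]_p) : dotv u u = 0 -> u = 0.
Proof.
rewrite dotvE => /eqP; rewrite psumr_eq0 => [/allP hu|i _]; last by rewrite -expr2 sqr_ge0.
apply/matrixP => i j; rewrite (ord1 j) mxE.
by have := hu i (mem_index_enum i); rewrite mulf_eq0 orbb => /eqP.
Qed.

Lemma pnorm_ge0 (p r : nat) (u : 'cV[R]_p) (v : 'cV[R]_r) : 0 <= pnorm u v.
Proof. exact: sqrtr_ge0. Qed.

Lemma pnormC (p r : nat) (u : 'cV[R]_p) (v : 'cV[R]_r) : pnorm u v = pnorm v u.
Proof. by rewrite /pnorm addrC. Qed.

Lemma pnormZ (p r : nat) (c : R) (u : 'cV[R]_p) (v : 'cV[R]_r) :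
  0 <= c -> pnorm (c *: u) (c *: v) = c * pnorm u v.
Proof.
have dotvZ (k : nat) (w : 'cV[R]_k) : dotv (c *: w) (c *: w) = c ^+ 2 * dotv w w.
  by rewrite !dotvE mulr_sumr; apply: eq_bigr => i _; rewrite !mxE; ring.
move=> c0; rewrite /pnorm !dotvZ -mulrDr sqrtrM ?sqr_ge0 //.
by rewrite sqrtr_sqr ger0_norm.
Qed.

Lemma pnorm_eq0 (p r : nat) (u : 'cV[R]_p) (v : 'cV[R]_r) :
  pnorm u v = 0 -> u = 0 /\ v = 0.
Proof.
rewrite /pnorm => /eqP; rewrite sqrtr_eq0 => h.
have := dotv_ge0 u; have := dotv_ge0 v.
by split; apply: dotv_eq0; lra.
Qed.

Lemma pnorm_coord_le (p r : nat) (u : 'cV[R]_p) (v : 'cV[R]_r) (z : R) (i : 'I_p) :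
  pnorm u v <= z -> 0 <= u i 0 -> u i 0 <= z.
Proof.
move=> hz hu; have z0 := le_trans (pnorm_ge0 u v) hz.
rewrite -(ler_pXn2r (n := 2)) ?nnegrE //.
apply: le_trans (_ : pnorm u v ^+ 2 <= _); last by rewrite ler_pXn2r ?nnegrE ?pnorm_ge0.
rewrite /pnorm sqr_sqrtr ?addr_ge0 ?dotv_ge0 // dotvE.
have hsq k : 0 <= u k 0 * u k 0 by rewrite -expr2 sqr_ge0.
by rewrite expr2 (le_trans (ler_term_sumr hsq i)) // lerDl dotv_ge0.
Qed.

Lemma sum_prod_mu (n : nat) (x s : 'cV[R]_n.+1) :
  \sum_i x i 0 * s i 0 = n.+1%:R * mu x s.
Proof. by rewrite /mu dotvE mulrC divfK // pnatr_eq0. Qed.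

Lemma mu_gt0 (n : nat) (x s : 'cV[R]_n.+1) :
  (forall i, 0 < x i 0) -> (forall i, 0 < s i 0) -> 0 < mu x s.
Proof.
move=> hx hs; rewrite /mu dotvE divr_gt0 ?ltr0n //.
have hxs i : 0 <= x i 0 * s i 0 by rewrite mulr_ge0 // ltW.
exact: lt_le_trans (mulr_gt0 (hx ord0) (hs ord0)) (ler_term_sumr hxs ord0).
Qed.

Lemma mu_ge0 (n : nat) (x s : 'cV[R]_n.+1) :
  (forall i, 0 < x i 0) -> (forall i, 0 < s i 0) -> 0 <= mu x s.
Proof. by move=> hx hs; rewrite ltW // mu_gt0. Qed.

End VectorFacts.

Section Residuals.
Variables (R : realType) (n m : nat) (Q : 'M[R]_n.+1) (q : 'cV[R]_n.+1)
  (A : 'M[R]_(m, n.+1)).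
Hypothesis std : std_assumptions Q A.

Lemma dotv_ker_ge0 (u : 'cV[R]_n.+1) (w : 'cV[R]_m) :
  A *m u = 0 -> 0 <= dotv u (Q *m u + A^T *m w).
Proof.
case: std => _ _ hpd hAu.
rewrite /dotv mulmxDr [u^T *m (A^T *m w)]mulmxA -trmx_mul hAu trmx0 mul0mx addr0.
have [->|u0] := eqVneq u 0; first by rewrite trmx0 !mul0mx mxE.
exact/ltW/hpd.
Qed.

Lemma r_d_step (x dx s ds : 'cV[R]_n.+1) (l dl : 'cV[R]_m) (a : R) :
  Q *m dx + A^T *m dl - ds = - r_d Q q A x l s ->
  r_d Q q A (x + a *: dx) (l + a *: dl) (s + a *: ds) = (1 - a) *: r_d Q q A x l s.
Proof.
move=> hnewton.
have -> : r_d Q q A (x + a *: dx) (l + a *: dl) (s + a *: ds)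
    = r_d Q q A x l s + a *: (Q *m dx + A^T *m dl - ds).
  by rewrite /r_d !mulmxDr -!scalemxAr; apply/matrixP => i j; rewrite !mxE; ring.
by rewrite hnewton scalerN scalerBl scale1r.
Qed.

Lemma r_p_step (x dx : 'cV[R]_n.+1) (a : R) :
  A *m dx = - r_p A x -> r_p A (x + a *: dx) = (1 - a) *: r_p A x.
Proof. by move=> hnewton; rewrite /r_p mulmxDr -scalemxAr hnewton scalerN scalerBl scale1r. Qed.

Section Monotonicity.
Variables (xs : 'cV[R]_n.+1) (ls : 'cV[R]_m) (ss : 'cV[R]_n.+1).
Hypothesis opt : optimal_pd Q q A xs ls ss.
Variables (x0 s0 x s : 'cV[R]_n.+1) (l0 l : 'cV[R]_m) (t : R).
Hypotheses (hrd : r_d Q q A x l s = t *: r_d Q q A x0 l0 s0)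
           (hrp : r_p A x = t *: r_p A x0).

Let ss_eq : ss = Q *m xs + q + A^T *m ls.
Proof.
by case: opt => + _ _ _ _; move/matrixP => h; apply/matrixP => i j;
  move: (h i j); rewrite /r_d !mxE; lra.
Qed.

Lemma interpolant_monotone :
  0 <= dotv (t *: x0 + (1 - t) *: xs - x) (t *: s0 + (1 - t) *: ss - s).
Proof.
case: opt => _ hAxs _ _ _.
have hAu : A *m (t *: x0 + (1 - t) *: xs - x) = 0.
  move: hrp; rewrite /r_p => hrp'.
  by rewrite mulmxBr mulmxDr -!scalemxAr hAxs hrp' scaler0 addr0 subrr.
have es : s = Q *m x + q + A^T *m l - t *: r_d Q q A x0 l0 s0.
  by rewrite -hrd /r_d opprB addrC subrK.
have -> : t *: s0 + (1 - t) *: ss - s =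
   Q *m (t *: x0 + (1 - t) *: xs - x) + A^T *m (t *: l0 + (1 - t) *: ls - l).
  rewrite es ss_eq /r_d !(mulmxDr, mulmxBr) -!scalemxAr !mulmxN.
  by apply/matrixP => i j; rewrite !mxE; ring.
exact: dotv_ker_ge0.
Qed.

Lemma newton_shift_monotone (dx ds : 'cV[R]_n.+1) (dl : 'cV[R]_m) :
  Q *m dx + A^T *m dl - ds = - r_d Q q A x l s -> A *m dx = - r_p A x ->
  0 <= dotv (dx + t *: (x0 - xs)) (ds + t *: (s0 - ss)).
Proof.
case: opt => _ hAxs _ _ _ hnd hnp.
have hAu : A *m (dx + t *: (x0 - xs)) = 0.
  by rewrite mulmxDr -scalemxAr mulmxBr hAxs subr0 hnp hrp /r_p addNr.
have eds : ds = Q *m dx + A^T *m dl + r_d Q q A x l s.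
  by rewrite -[r_d _ _ _ _ _ _]opprK -hnd opprB addrC subrK.
have -> : ds + t *: (s0 - ss) = Q *m (dx + t *: (x0 - xs)) + A^T *m (dl + t *: (l0 - ls)).
  rewrite eds hrd ss_eq /r_d !(mulmxDr, mulmxBr) -!scalemxAr !mulmxBr.
  by apply/matrixP => i j; rewrite !mxE; ring.
exact: dotv_ker_ge0.
Qed.

End Monotonicity.
End Residuals.

(* Chosen so that [4 a W <= smin (1 - gamma) mu] in [newton_step_safe] for the
   bound [W = step_const gamma beta * n^2 mu] of [scaled_step_sum_le]. *)
Definition safe_step_scale (R : realFieldType) (beta gamma smin : R) :=
  smin * (1 - gamma) / (4 * step_const gamma beta).

Definition safe_step (R : realFieldType) (beta gamma smin : R) (n : nat) :=
  safe_step_scale beta gamma smin / n.+1%:R ^+ 2.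

Lemma safe_step_scale_bounds (R : realFieldType) (beta gamma smin : R) :
  0 < gamma < 1 -> 0 < smin <= 1 / 2 -> 0 < safe_step_scale beta gamma smin < 1.
Proof.
move=> /andP[g0 g1] /andP[sm0 sm1]; have c6 := step_const_ge6 beta g0.
rewrite /safe_step_scale divr_gt0 ?mulr_gt0 ?subr_gt0 //=; last lra.
rewrite ltr_pdivrMr ?mulr_gt0 //; last lra.
have : smin * (1 - gamma) <= smin by rewrite ler_piMr ?(ltW sm0) //; lra.
lra.
Qed.

Lemma safe_step_bounds (R : realFieldType) (beta gamma smin : R) (n : nat) :
  0 < gamma < 1 -> 0 < smin <= 1 / 2 -> 0 < safe_step beta gamma smin n < 1.
Proof.
move=> hg hsm; have /andP[h0 h1] := safe_step_scale_bounds beta hg hsm.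
have N0 : 0 < n.+1%:R ^+ 2 :> R by rewrite exprn_gt0.
have N1 : 1 <= n.+1%:R ^+ 2 :> R by rewrite -natrX ler1n expn_gt0.
rewrite /safe_step divr_gt0 //= ltr_pdivrMr //.
by rewrite (lt_le_trans h1) // mul1r.
Qed.

Section Run.
Variables (R : realType) (beta gamma smin smax : R) (n m : nat) (Q : 'M[R]_n.+1)
  (q : 'cV[R]_n.+1) (A : 'M[R]_(m, n.+1))
  (xs : 'cV[R]_n.+1) (ls : 'cV[R]_m) (ss : 'cV[R]_n.+1) (zeta : R)
  (x : nat -> 'cV[R]_n.+1) (l : nat -> 'cV[R]_m) (s : nat -> 'cV[R]_n.+1)
  (sigma : nat -> R)
  (dx : nat -> 'cV[R]_n.+1) (dl : nat -> 'cV[R]_m) (ds : nat -> 'cV[R]_n.+1)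
  (alpha : nat -> R).
Hypotheses (hbeta : 1 <= beta) (hgamma : 0 < gamma < 1) (hsmin : 0 < smin)
  (hsmax : smax <= 1 / 2) (hsm : smin <= smax)
  (std : std_assumptions Q A) (opt : optimal_pd Q q A xs ls ss)
  (zeta_gt0 : 0 < zeta) (opt_le_zeta : pnorm xs ss <= zeta)
  (hx0 : x 0%N = zeta *: onesv R n.+1) (hs0 : s 0%N = zeta *: onesv R n.+1)
  (run : IIPM_run Q q A beta gamma smin smax x l s sigma dx dl ds alpha).

Definition acceptable k (a : R) :=
  [/\ 0 < a, a <= 1,
      nbhd Q q A gamma beta (x 0%N) (l 0%N) (s 0%N)
               (x k + a *: dx k) (l k + a *: dl k) (s k + a *: ds k) &
      mu (x k + a *: dx k) (s k + a *: ds k) <= (1 - a / 100) * mu (x k) (s k)].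

Lemma iipm_step k :
  [/\ smin <= sigma k <= smax,
      [/\ Q *m dx k + A^T *m dl k - ds k = - r_d Q q A (x k) (l k) (s k),
          A *m dx k = - r_p A (x k) &
          forall i, s k i 0 * dx k i 0 + x k i 0 * ds k i 0
                    = - (x k i 0 * s k i 0) + sigma k * mu (x k) (s k)],
      acceptable k (alpha k) /\ (forall a, acceptable k a -> a <= alpha k) &
      [/\ x k.+1 = x k + alpha k *: dx k, l k.+1 = l k + alpha k *: dl k &
          s k.+1 = s k + alpha k *: ds k]].
Proof. by case: run => _ [_ /(_ k)]. Qed.

Lemma mu_init : mu (x 0%N) (s 0%N) = zeta ^+ 2.
Proof.
rewrite /mu dotvE hx0 hs0 (eq_bigr (fun _ => zeta ^+ 2)); last by move=> i _; rewrite !mxE; ring.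
by rewrite sumr_const card_ord -mulr_natr; field; rewrite -(natrD _ 1) pnatr_eq0.
Qed.

Lemma opt_coord_le i : 0 <= xs i 0 <= zeta /\ 0 <= ss i 0 <= zeta.
Proof.
case: opt => _ _ hxs hss _.
rewrite hxs hss (pnorm_coord_le opt_le_zeta) //.
by rewrite (pnorm_coord_le (v := xs)) // pnormC.
Qed.

Lemma next_iterate k :
  [/\ 0 < alpha k, alpha k <= 1,
      nbhd Q q A gamma beta (x 0%N) (l 0%N) (s 0%N) (x k.+1) (l k.+1) (s k.+1),
      mu (x k.+1) (s k.+1) <= (1 - alpha k / 100) * mu (x k) (s k) &
      r_d Q q A (x k.+1) (l k.+1) (s k.+1) = (1 - alpha k) *: r_d Q q A (x k) (l k) (s k)
      /\ r_p A (x k.+1) = (1 - alpha k) *: r_p A (x k)].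
Proof.
case: (iipm_step k) => _ [hnd hnp _] [[a0 a1 hnb hmu] _] [-> -> ->].
by split=> //; split; [exact: r_d_step | exact: r_p_step].
Qed.

Lemma nbhd_iterate k : nbhd Q q A gamma beta (x 0%N) (l 0%N) (s 0%N) (x k) (l k) (s k).
Proof.
case: k => [|k]; last by case: (next_iterate k).
have [g0 g1] := andP hgamma.
split=> [|i|i|i].
- by rewrite -mulrA ler_peMl // divr_ge0 ?pnorm_ge0 // mu_init sqr_ge0.
- by rewrite hx0 !mxE mulr1.
- by rewrite hs0 !mxE mulr1.
- rewrite mu_init hx0 hs0 !mxE !mulr1 -[X in _ <= X]mul1r expr2.
  by rewrite ler_wpM2r ?(ltW g1) // mulr_ge0 // ltW.
Qed.

Definition infeas k := \prod_(j < k) (1 - alpha j).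

Lemma infeas_ge0 k : 0 <= infeas k.
Proof.
rewrite /infeas prodr_ge0 // => j _.
by case: (next_iterate j) => _ a1 _ _ _; rewrite subr_ge0.
Qed.

Lemma residuals_iterate k :
  r_d Q q A (x k) (l k) (s k) = infeas k *: r_d Q q A (x 0%N) (l 0%N) (s 0%N)
  /\ r_p A (x k) = infeas k *: r_p A (x 0%N).
Proof.
elim: k => [|k [IHd IHp]]; first by rewrite /infeas big_ord0 !scale1r.
case: (next_iterate k) => _ _ _ _ [-> ->].
by rewrite /infeas big_ord_recr /= IHd IHp !scalerA ![_ * (1 - alpha k)]mulrC.
Qed.

Lemma scaled_step_sum_at k t : 0 <= t <= 1 ->
  r_d Q q A (x k) (l k) (s k) = t *: r_d Q q A (x 0%N) (l 0%N) (s 0%N) ->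
  r_p A (x k) = t *: r_p A (x 0%N) ->
  t * zeta ^+ 2 <= beta * mu (x k) (s k) ->
  \sum_i scaled_sqr (x k i 0) (s k i 0) (dx k i 0) (ds k i 0)
    <= step_const gamma beta * (n.+1%:R ^+ 2 * mu (x k) (s k)).
Proof.
move=> ht hrd hrp htb.
case: (iipm_step k) => /andP[hs1 hs2] [hnd hnp hnewton] _ _.
case: (nbhd_iterate k) => _ hx hs hcen.
have hsig : 0 <= sigma k <= 1.
  by rewrite (le_trans (ltW hsmin) hs1) (le_trans hs2) // (le_trans hsmax) // ler_pdivrMr //= mul1r ler1n.
have hxs i : 0 <= xs i 0 <= zeta by case: (opt_coord_le i).
have hss i : 0 <= ss i 0 <= zeta by case: (opt_coord_le i).
have hxss : \sum_i xs i 0 * ss i 0 = 0 by case: opt => _ _ _ _; rewrite dotvE.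
have hmono := interpolant_monotone std opt hrd hrp.
have hmono' := newton_shift_monotone std opt hrd hrp hnd hnp.
have hm : 0 <= \sum_i (t * zeta + (1 - t) * xs i 0 - x k i 0)
                      * (t * zeta + (1 - t) * ss i 0 - s k i 0).
  move: hmono; rewrite hx0 dotvE hs0 (eq_bigr (fun i => (t * zeta + (1 - t) * xs i 0 - x k i 0)
                      * (t * zeta + (1 - t) * ss i 0 - s k i 0))) // => i _.
  by rewrite !mxE; ring.
have hm' : 0 <= \sum_i (dx k i 0 + t * (zeta - xs i 0)) * (ds k i 0 + t * (zeta - ss i 0)).
  move: hmono'; rewrite hx0 dotvE hs0 (eq_bigr (fun i =>
    (dx k i 0 + t * (zeta - xs i 0)) * (ds k i 0 + t * (zeta - ss i 0)))) // => i _.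
  by rewrite !mxE; ring.
exact: (scaled_step_sum_le hx hs (mu_gt0 hx hs) (proj1 (andP hgamma)) hcen hsig
  (ltW zeta_gt0) hxs hss ht hnewton (sum_prod_mu _ _) hxss hm hm' htb hbeta).
Qed.

Lemma safe_step_acceptable k t : 0 <= t <= 1 ->
  r_d Q q A (x k) (l k) (s k) = t *: r_d Q q A (x 0%N) (l 0%N) (s 0%N) ->
  r_p A (x k) = t *: r_p A (x 0%N) ->
  t * zeta ^+ 2 <= beta * mu (x k) (s k) ->
  acceptable k (safe_step beta gamma smin n).
Proof.
move=> ht hrd hrp htb.
set a := safe_step beta gamma smin n; set muk := mu (x k) (s k).
case: (iipm_step k) => /andP[hs1 hs2] [hnd hnp hnewton] _ _.
case: (nbhd_iterate k) => hres hx hs hcen.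
have mu0 : 0 < muk := mu_gt0 hx hs.
have hsig : 0 < sigma k <= 1 / 2 by rewrite (lt_le_trans hsmin hs1) (le_trans hs2).
have /andP[a0 a1] : 0 < a < 1.
  by apply: safe_step_bounds => //; rewrite hsmin (le_trans hsm).
have [hW hSW] := step_products_le hx hs (scaled_step_sum_at ht hrd hrp htb).
have haW : 4 * (a * (step_const gamma beta * (n.+1%:R ^+ 2 * muk)))
    <= sigma k * (1 - gamma) * muk.
  have c0 : 0 < step_const gamma beta.
    by apply: lt_le_trans (step_const_ge6 beta (proj1 (andP hgamma))).
  have -> : 4 * (a * (step_const gamma beta * (n.+1%:R ^+ 2 * muk))) = smin * (1 - gamma) * muk.
    rewrite /a /safe_step /safe_step_scale; field.
    by rewrite -(natrD _ 1) pnatr_eq0 /= lt0r_neq0.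
  by rewrite ler_wpM2r ?(ltW mu0) // ler_wpM2r // subr_ge0 ltW // (andP hgamma).2.
have [hxp hsp hcen' hdec hinc] := newton_step_safe (ltn0Sn n) hx hs mu0 hgamma hsig hnewton
  hcen (sum_prod_mu _ _) hW hSW (introT andP (conj a0 (ltW a1))) haW.
have hmuM : mu (x k + a *: dx k) (s k + a *: ds k)
    = (\sum_i (x k i 0 + a * dx k i 0) * (s k i 0 + a * ds k i 0)) / n.+1%:R.
  by rewrite /mu dotvE; congr (_ / _); apply: eq_bigr => i _; rewrite !mxE.
split; rewrite ?hmuM //; first exact: ltW.
split=> [|i|i|i]; rewrite ?mxE ?hmuM //.
rewrite (r_d_step _ hnd) (r_p_step _ hnp) pnormZ ?subr_ge0 ?(ltW a1) //.
apply: le_trans hres.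
have M0 : 0 < (1 - a) * muk by rewrite mulr_gt0 // subr_gt0.
rewrite ler_pdivrMr ?(lt_le_trans M0 hinc) // mulrAC ler_pdivlMr //.
by rewrite mulrAC -/muk [X in _ <= X]mulrC ler_wpM2r ?pnorm_ge0.
Qed.

Lemma infeas_le_mu k :
  0 < pnorm (r_d Q q A (x 0%N) (l 0%N) (s 0%N)) (r_p A (x 0%N)) ->
  infeas k * zeta ^+ 2 <= beta * mu (x k) (s k).
Proof.
set r0 := pnorm _ _ => r0_gt0.
have [hrd hrp] := residuals_iterate k.
case: (nbhd_iterate k) => + hx hs _.
rewrite hrd hrp pnormZ ?infeas_ge0 // -/r0 mu_init.
have mu0 := mu_gt0 hx hs; have z0 : 0 < zeta ^+ 2 by rewrite exprn_gt0.
by rewrite ler_pdivrMr // mulrAC ler_pdivlMr // mulrAC [beta * r0 * _]mulrAC ler_pM2r.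
Qed.

Lemma safe_step_le_alpha k : safe_step beta gamma smin n <= alpha k.
Proof.
case: (iipm_step k) => _ _ [_ hmax] _; apply: hmax.
have [hrd hrp] := residuals_iterate k.
have [/pnorm_eq0 [rd0 rp0]|r0_gt0] := eqVneq
  (pnorm (r_d Q q A (x 0%N) (l 0%N) (s 0%N)) (r_p A (x 0%N))) 0.
- apply: (safe_step_acceptable (t := 0)); rewrite ?lexx ?ler01 //.
  + by rewrite hrd rd0 !scaler0.
  + by rewrite hrp rp0 !scaler0.
  + case: (nbhd_iterate k) => _ hx hs _.
    by rewrite mul0r mulr_ge0 ?(le_trans ler01 hbeta) ?mu_ge0.
- apply: (safe_step_acceptable (t := infeas k)) => //; last first.
    by apply: infeas_le_mu; rewrite lt_def r0_gt0 pnorm_ge0.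
  rewrite infeas_ge0 /infeas prodr_ile1 // => j _.
  by case: (next_iterate j) => a0 a1 _ _ _; rewrite subr_ge0 a1 lerBlDr lerDl ltW.
Qed.

Lemma mu_decay k :
  mu (x k) (s k) <= (1 - safe_step beta gamma smin n / 100) ^+ k * zeta ^+ 2.
Proof.
set a := safe_step beta gamma smin n.
have /andP[a0 a1] : 0 < a < 1.
  by apply: safe_step_bounds => //; rewrite hsmin (le_trans hsm).
elim: k => [|k IH]; first by rewrite expr0 mul1r mu_init.
case: (next_iterate k) => _ _ _ hmu _.
case: (nbhd_iterate k) => _ hx hs _.
apply: le_trans hmu _; rewrite exprS -mulrA.
have hak : 1 - alpha k / 100 <= 1 - a / 100.
  by have := safe_step_le_alpha k; rewrite -/a; lra.
apply: le_trans (ler_wpM2r (mu_ge0 hx hs) hak) _.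
by rewrite ler_wpM2l //; lra.
Qed.

End Run.

(* [(1 - rho)^k <= exp (- rho k)], and [zeta^2 <= chi / eps^kappa] turns
   [exp (- rho k) zeta^2 <= eps] into [rho k >= ln chi - (1 + kappa) ln eps]. *)
Lemma geometric_decay_count (R : realType) (chi kappa eps rho zeta : R) (u : nat -> R) :
  0 < chi -> 0 < kappa -> 0 < eps -> 0 < rho <= 1 ->
  zeta ^+ 2 <= chi / (eps `^ kappa) ->
  (forall k, u k <= (1 - rho) ^+ k * zeta ^+ 2) ->
  exists K : nat, K%:R <= (`|ln chi| + (1 + kappa) * `|ln eps|) / rho + 1 /\
    forall k, (K <= k)%N -> u k <= eps.
Proof.
move=> chi0 kappa0 eps0 /andP[rho0 rho1] hzeta hu.
set L := `|ln chi| + (1 + kappa) * `|ln eps|.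
have L0 : 0 <= L by rewrite addr_ge0 // mulr_ge0 // addr_ge0 // ltW.
have y0 : 0 <= L / rho by rewrite divr_ge0 // ltW.
have /andP[trunc_le trunc_gt] := truncn_itv y0.
exists (Num.truncn (L / rho)).+1; split; first by rewrite -natr1 lerD2r.
move=> k hk; apply: le_trans (hu k) _.
have hpow : (1 - rho) ^+ k <= expR (- (rho * k%:R)).
  rewrite -mulNr expRM_natr lerXn2r ?nnegrE ?subr_ge0 ?expR_ge0 //.
  by have := expR_ge1Dx (- rho); rewrite addrC.
have hK : L <= rho * k%:R.
  rewrite mulrC -ler_pdivrMr //.
  by apply: le_trans (ltW trunc_gt) _; rewrite ler_nat.
have hz : zeta ^+ 2 <= expR (ln chi - kappa * ln eps).
  by rewrite expRB lnK ?posrE //; move: hzeta; rewrite /powR gt_eqF.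
apply: le_trans (ler_pM _ _ hpow hz) _; [by rewrite exprn_ge0 // subr_ge0 | exact: sqr_ge0 |].
rewrite -expRD -[X in _ <= X](lnK (x := eps)) ?posrE // ler_expR.
have : ln chi <= `|ln chi| by exact: ler_norm.
have : - ln eps <= `|ln eps| by rewrite -normrN ler_norm.
have : - (kappa * ln eps) <= kappa * `|ln eps|.
  by rewrite -mulrN ler_wpM2l ?(ltW kappa0) // -normrN ler_norm.
move: hK; rewrite /L; lra.
Qed.

Lemma iteration_count_le (R : realFieldType) (delta a b kappa NN : R) :
  0 < delta -> 0 <= a -> 0 <= b -> 0 < kappa -> 1 <= NN ->
  (a + (1 + kappa) * b) / (delta / NN / 100) + 1
    <= (100 * (a + 1 + kappa) / delta + 1) * NN * (1 + b).
Proof.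
move=> d0 a0 b0 k0 NN1; have NN0 : 0 < NN by exact: lt_le_trans ltr01 NN1.
have -> : (a + (1 + kappa) * b) / (delta / NN / 100) = 100 * NN * (a + (1 + kappa) * b) / delta.
  by field; rewrite !gt_eqF.
have -> : (100 * (a + 1 + kappa) / delta + 1) * NN * (1 + b)
    = 100 * NN * ((a + 1 + kappa) * (1 + b)) / delta + NN * (1 + b).
  by field; rewrite gt_eqF.
have hL : a + (1 + kappa) * b <= (a + 1 + kappa) * (1 + b).
  have -> : (a + 1 + kappa) * (1 + b) = a + (1 + kappa) * b + a * b + (1 + kappa) by ring.
  by have := mulr_ge0 a0 b0; lra.
have : 100 * NN * (a + (1 + kappa) * b) / delta <= 100 * NN * ((a + 1 + kappa) * (1 + b)) / delta.
  by rewrite ler_wpM2r ?invr_ge0 ?(ltW d0) // ler_wpM2l // mulr_ge0 // ltW.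
have : 1 <= NN * (1 + b) by rewrite -[1]mulr1 ler_pM //; lra.
lra.
Qed.

Theorem theorem3 (R : realType) (chi kappa beta gamma smin smax : R) :
  0 < chi -> 0 < kappa -> 1 <= beta -> 0 < gamma < 1 ->
  0 < smin -> smin < smax -> smax <= 1 / 2 ->
  exists C : R, 0 < C /\
  forall (n m : nat) (Q : 'M[R]_n.+1) (q : 'cV[R]_n.+1) (A : 'M[R]_(m, n.+1))
         (xs : 'cV[R]_n.+1) (ls : 'cV[R]_m) (ss : 'cV[R]_n.+1) (eps zeta : R),
    std_assumptions Q A ->
    optimal_pd Q q A xs ls ss ->
    0 < eps -> 0 < zeta ->
    pnorm xs ss <= zeta ->
    zeta ^+ 2 <= chi / (eps `^ kappa) ->
    forall (x : nat -> 'cV[R]_n.+1) (l : nat -> 'cV[R]_m) (s : nat -> 'cV[R]_n.+1)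
           (sigma : nat -> R)
           (dx : nat -> 'cV[R]_n.+1) (dl : nat -> 'cV[R]_m) (ds : nat -> 'cV[R]_n.+1)
           (alpha : nat -> R),
      x 0%N = zeta *: onesv R n.+1 -> l 0%N = 0 -> s 0%N = zeta *: onesv R n.+1 ->
      IIPM_run Q q A beta gamma smin smax x l s sigma dx dl ds alpha ->
      exists K : nat,
        K%:R <= C * (n.+1%:R) ^+ 2 * (1 + `|ln eps|) /\
        forall k : nat, (K <= k)%N -> mu (x k) (s k) <= eps.
Proof.
move=> chi0 kappa0 hbeta hgamma hsmin hsm hsmax.
have hsmin' : 0 < smin <= 1 / 2 by rewrite hsmin (le_trans (ltW hsm)).
have /andP[delta0 _] := safe_step_scale_bounds beta hgamma hsmin'.
exists (100 * (`|ln chi| + 1 + kappa) / safe_step_scale beta gamma smin + 1); split.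
  by rewrite ltr_pwDr // divr_ge0 ?(ltW delta0) // mulr_ge0 // addr_ge0 // ltW.
move=> n m Q q A xs ls ss eps zeta std opt eps0 zeta0 opt_le hzeta
  x l s sigma dx dl ds alpha hx0 _ hs0 run.
have /andP[a0 a1] := safe_step_bounds beta n hgamma hsmin'.
have hrho : 0 < safe_step beta gamma smin n / 100 <= 1.
  by rewrite divr_gt0 //= ler_pdivrMr //= mul1r (le_trans (ltW a1)) // ler1n.
have [K [hK hKmu]] := geometric_decay_count chi0 kappa0 eps0 hrho hzeta
  (mu_decay hbeta hgamma hsmin hsmax (ltW hsm) std opt zeta0 opt_le hx0 hs0 run).
exists K; split => //; apply: le_trans hK _.
apply: iteration_count_le delta0 (normr_ge0 _) (normr_ge0 _) kappa0 _.
by rewrite -natrX ler1n expn_gt0.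
Qed.
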